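(* Let $\mathcal G$ be a graph on $n$ vertices in which every vertex has the same degree $r$, and let $\mathcal C\subseteq\{0,1\}^n$ be a binary code with $|\mathcal C|\ge 2$. Then the distance of the CWS code $\mathcal Q=(\mathcal G,\mathcal C)$ is at most $r+1$.
   Context: A Pauli operator on $n$ qubits is, up to a phase, $X^{\mathbf v}Z^{\mathbf u}=X_1^{v_1}\cdots X_n^{v_n}Z_1^{u_1}\cdots Z_n^{u_n}$ with $\mathbf v,\mathbf u\in\{0,1\}^n$; its weight is the number of qubits on which it acts as a non-identity operator. For a subspace $\mathcal Q\subseteq(\mathbb C^2)^{\otimes n}$ with orthonormal basis $\{|i\rangle\}$, a Pauli operator $E$ is detectable if $\langle j|E|i\rangle=C_E\delta_{ij}$ for all $i,j$, with $C_E$ independent of $i,j$; the distance of $\mathcal Q$ is the smallest weight of a non-detectable Pauli operator. Let $\mathcal G$ be a simple graph on vertex set $\{1,\dots,n\}$ with adjacency matrix $R\in\{0,1\}^{n\times n}$ (symmetric, zero diagonal) and rows $\mathbf r_i$. The graph-stabilizer generators are $S_i=X_iZ^{\mathbf r_i}$, $i=1,\dots,n$; they commute, generate an abelian group $\mathscr S_{\mathcal G}$, and stabilize a unique (up to phase) state $|s\rangle$, the graph state. For a binary code $\mathcal C\subseteq\{0,1\}^n$ with $K$ words, the CWS code in standard form is $\mathcal Q=(\mathcal G,\mathcal C)=\operatorname{span}\{Z^{\mathbf c}|s\rangle:\mathbf c\in\mathcal C\}$; it has dimension $K$. *)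

From HB Require Import structures.
From mathcomp Require Import all_boot all_order all_algebra all_field.
Set Implicit Arguments. Unset Strict Implicit. Unset Printing Implicit Defensive.
Import Order.TTheory GRing.Theory Num.Theory.
Local Open Scope ring_scope.

Definition bits (n : nat) := {ffun 'I_n -> bool}.

(* vectors of (C^2)^{(x)n}: coefficients in the computational basis |x> *)
Definition state (n : nat) := bits n -> algC.

Definition bzero n : bits n := [ffun => false].
Definition bxor n (x y : bits n) : bits n := [ffun k => x k (+) y k].
Definition bdot n (u x : bits n) : bool := odd #|[set k | u k && x k]|.
Definition sgn (b : bool) : algC := (-1) ^+ b.

(* X^v Z^u : Z^u|x> = (-1)^{u.x}|x>,  X^v|x> = |x+v> *)
Definition pauli n (v u : bits n) (psi : state n) : state n :=
  fun y => sgn (bdot u (bxor y v)) * psi (bxor y v).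

Definition weight n (v u : bits n) : nat := #|[set k | v k || u k]|.

Definition inner n (phi psi : state n) : algC :=
  \sum_(x : bits n) (Num.conj (phi x)) * psi x.

(* graph given by a symmetric irreflexive relation e on the vertices;
   r_i is the i-th row of the adjacency matrix *)
Definition unitv n (i : 'I_n) : bits n := [ffun k => k == i].
Definition adjrow n (e : rel 'I_n) (i : 'I_n) : bits n := [ffun k => e i k].

Definition graph_stab n (e : rel 'I_n) (i : 'I_n) : state n -> state n :=
  pauli (unitv i) (adjrow e i).

(* s is (a phase representative of) the graph state: normalized and
   stabilized by all S_i *)
Definition is_graph_state n (e : rel 'I_n) (s : state n) : Prop :=
  inner s s = 1 /\ forall i y, graph_stab e i s y = s y.

Definition zop n (c : bits n) (psi : state n) : state n := pauli (bzero n) c psi.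

Definition in_cws n (C : {set bits n}) (s : state n) (psi : state n) : Prop :=
  exists a : bits n -> algC, forall y, psi y = \sum_(c in C) a c * zop c s y.

Definition in_span n K (b : 'I_K -> state n) (psi : state n) : Prop :=
  exists a : 'I_K -> algC, forall y, psi y = \sum_(i < K) a i * b i y.

Definition cws_onb n (C : {set bits n}) (s : state n) K (b : 'I_K -> state n) : Prop :=
  [/\ forall i j, inner (b i) (b j) = (i == j)%:R,
      forall i, in_cws C s (b i)
    & forall c, c \in C -> in_span b (zop c s)].

Definition detectable n K (b : 'I_K -> state n) (v u : bits n) : Prop :=
  exists CE : algC, forall i j, inner (b j) (pauli v u (b i)) = CE * (i == j)%:R.

From HB Require Import structures.
From mathcomp Require Import all_boot all_order all_algebra all_field.
From mathcomp Require Import ring.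
Set Implicit Arguments. Unset Strict Implicit. Unset Printing Implicit Defensive.
Import GRing.Theory Num.Theory.

(* Pick two distinct codewords c, c' and a coordinate i where
   they differ, and take E = S_i = X_i Z^{r_i}, the i-th graph stabilizer,
   whose weight is 1 + deg i = r + 1.  Since Z^c anticommutes with S_i
   exactly when c_i = 1, every Z^c|s> is an eigenvector of S_i with
   eigenvalue (-1)^{c_i}.  If S_i were detectable with constant C_E, then by
   sesquilinearity <psi|S_i|psi> = C_E <psi|psi> for every psi in the code;
   applied to the unit vectors Z^c|s> and Z^{c'}|s> this forces
   C_E = (-1)^{c_i} = (-1)^{c'_i}, a contradiction. *)

Local Open Scope ring_scope.

Lemma sgn_bdot_prod n (u x : bits n) : sgn (bdot u x) = \prod_k sgn (u k && x k).
Proof.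
rewrite /sgn /bdot signr_odd -prodr_const big_mkcond /=.
by apply: eq_bigr => k _; rewrite inE; case: (u k && x k).
Qed.

Lemma sgn_bdotD n (u x y : bits n) :
  sgn (bdot u (bxor x y)) = sgn (bdot u x) * sgn (bdot u y).
Proof.
rewrite !sgn_bdot_prod -big_split; apply: eq_bigr => k _; rewrite ffunE.
by rewrite andb_addr /sgn signr_addb.
Qed.

Lemma sgn_bdot_unitv n (c : bits n) (i : 'I_n) : sgn (bdot c (unitv i)) = sgn (c i).
Proof.
rewrite sgn_bdot_prod (bigD1 i) //= ffunE eqxx andbT big1 ?mulr1 // => k hk.
by rewrite ffunE (negPf hk) andbF.
Qed.

Lemma conj_sgnK (b : bool) : Num.conj (sgn b) * sgn b = 1.
Proof. by rewrite /sgn rmorph_sign -signr_addb addbb. Qed.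

Lemma bxor0 n (w : bits n) : bxor w (bzero n) = w.
Proof. by apply/ffunP => k; rewrite !ffunE addbF. Qed.

Lemma inner_ext n (f f' g g' : state n) :
  (forall x, f x = f' x) -> (forall x, g x = g' x) -> inner f g = inner f' g'.
Proof. by move=> hf hg; apply: eq_bigr => x _; rewrite hf hg. Qed.

Lemma inner_lincomb n K (f g : 'I_K -> state n) (a d : 'I_K -> algC) :
  inner (fun x => \sum_j a j * f j x) (fun x => \sum_k d k * g k x) =
  \sum_j \sum_k Num.conj (a j) * d k * inner (f j) (g k).
Proof.
rewrite /inner.
under eq_bigr => x _ do rewrite rmorph_sum mulr_suml.
rewrite exchange_big; apply: eq_bigr => j _.
under eq_bigr => x _ do rewrite mulr_sumr.
rewrite exchange_big; apply: eq_bigr => k _.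
rewrite mulr_sumr; apply: eq_bigr => x _.
by rewrite rmorphM /=; ring.
Qed.

Lemma pauli_lincomb n K (v u : bits n) (f : 'I_K -> state n) (a : 'I_K -> algC) y :
  pauli v u (fun x => \sum_j a j * f j x) y = \sum_j a j * pauli v u (f j) y.
Proof. by rewrite /pauli mulr_sumr; apply: eq_bigr => j _; ring. Qed.

Lemma zop_norm n (c : bits n) (s : state n) : inner (zop c s) (zop c s) = inner s s.
Proof.
apply: eq_bigr => x _.
by rewrite /zop /pauli bxor0 rmorphM /= mulrACA conj_sgnK mul1r.
Qed.

(* If s is fixed by the graph stabilizer S_i, then Z^c|s> is an eigenvector
   of S_i with eigenvalue (-1)^{c_i}: S_i Z^c = (-1)^{c_i} Z^c S_i. *)
Lemma graph_stab_zop n (e : rel 'I_n) (i : 'I_n) (c : bits n) (s : state n) :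
  (forall y, graph_stab e i s y = s y) ->
  forall y, graph_stab e i (zop c s) y = sgn (c i) * zop c s y.
Proof.
move=> fix_s y.
rewrite /graph_stab /zop /pauli !bxor0 [sgn (bdot c _)]sgn_bdotD -sgn_bdot_unitv -(fix_s y).
by rewrite /graph_stab /pauli; ring.
Qed.

Section Detectability.

Variables (n K : nat) (b : 'I_K -> state n).
Hypothesis b_orthonormal : forall j k, inner (b j) (b k) = (j == k)%:R.

Lemma detectable_expectation (v u : bits n) (CE : algC) (psi : state n) :
  (forall j k, inner (b k) (pauli v u (b j)) = CE * (j == k)%:R) ->
  in_span b psi -> inner psi (pauli v u psi) = CE * inner psi psi.
Proof.
move=> hCE [a psiE].
have Epsi y : pauli v u psi y = \sum_j a j * pauli v u (b j) y.
  by rewrite -pauli_lincomb /pauli psiE.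
rewrite (inner_ext psiE Epsi) inner_lincomb (inner_ext psiE psiE) inner_lincomb.
rewrite mulr_sumr; apply: eq_bigr => j _; rewrite mulr_sumr.
by apply: eq_bigr => k _; rewrite hCE b_orthonormal eq_sym; ring.
Qed.

Lemma detectable_eigenvalue (v u : bits n) (psi : state n) (lam : algC) :
  in_span b psi -> inner psi psi != 0 ->
  (forall y, pauli v u psi y = lam * psi y) ->
  forall CE, (forall j k, inner (b k) (pauli v u (b j)) = CE * (j == k)%:R) ->
  CE = lam.
Proof.
move=> span_psi nz_psi eig CE hCE.
have := detectable_expectation hCE span_psi.
have -> : inner psi (pauli v u psi) = lam * inner psi psi.
  by rewrite /inner mulr_sumr; apply: eq_bigr => x _; rewrite eig mulrCA.
by move/(mulIf nz_psi).
Qed.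

End Detectability.

Lemma weight_graph_stab n (e : rel 'I_n) (i : 'I_n) :
  irreflexive e -> weight (unitv i) (adjrow e i) = #|[set j | e i j]|.+1.
Proof.
move=> e_irr; rewrite /weight.
have -> : [set k | unitv i k || adjrow e i k] = i |: [set j | e i j].
  by apply/setP => k; rewrite !inE !ffunE.
by rewrite cardsU1 inE e_irr.
Qed.

Lemma bits_neq_coord n (c c' : bits n) : c != c' -> exists i, c i != c' i.
Proof.
move=> neq; apply/existsP; apply: contraR neq => /existsPn same.
by apply/eqP/ffunP => k; apply/eqP/negbNE/same.
Qed.

Local Close Scope ring_scope.

(* distance <= r+1  <=>  some non-detectable Pauli operator has weight <= r+1 *)
Theorem corollary1 (n r : nat) (e : rel 'I_n)
    (e_sym : symmetric e) (e_irr : irreflexive e)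
    (e_reg : forall i : 'I_n, #|[set j | e i j]| = r)
    (C : {set bits n}) (hC : 2 <= #|C|)
    (s : state n) (hs : is_graph_state e s)
    (K : nat) (b : 'I_K -> state n) (hb : cws_onb C s b) :
  exists v u : bits n, weight v u <= r.+1 /\ ~ detectable b v u.
Proof.
case/card_gt1P: hC => c [c' [cC c'C neq_cc']].
have [i diff_i] := bits_neq_coord neq_cc'.
exists (unitv i), (adjrow e i); split; first by rewrite weight_graph_stab // e_reg.
case=> CE hCE.
case: hs => norm_s fix_s; case: hb => b_orth _ code_span.
have CE_sign d : d \in C -> CE = sgn (d i).
  move=> dC; apply: (detectable_eigenvalue b_orth (code_span d dC) _ _ hCE).
  - by rewrite zop_norm norm_s oner_eq0.
  - exact: (@graph_stab_zop n e i d s (fix_s i)).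
have same_sign : sgn (c i) = sgn (c' i) by rewrite -CE_sign // -CE_sign.
by rewrite (signr_inj same_sign) eqxx in diff_i.
Qed.
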